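(* Let $q \equiv 1 \pmod 4$ be a prime number with $q \ge 13$, let $s \in \mathbb Z_q^*$ with $\mathrm{ord}_q(s) = \frac{q-1}{2} = m$, and let $a_0, a_1, \dots, a_{m-1} \in \mathbb Z_q$. Suppose that each of the sets $\{a_0,a_2,a_4,\dots,a_{m-2}\}$ and $\{a_1,a_3,a_5,\dots,a_{m-1}\}$ has at least two distinct elements modulo $q$. Then the set $$\mathcal A = \left\{a_{\sigma(0)} + a_{\sigma(1)}s + a_{\sigma(2)}s^2 + \cdots + a_{\sigma(m-1)}s^{m-1} \in \mathbb Z_q \;\middle|\; \sigma \text{ a permutation of } (0, 1, \dots, m-1) \right\}$$ has at least $q-1$ distinct elements. *)

From mathcomp Require Import all_boot all_order all_algebra all_fingroup.
Set Implicit Arguments. Unset Strict Implicit. Unset Printing Implicit Defensive.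
Import GRing.Theory.
Local Open Scope ring_scope.

Definition perm_sums (R : finRingType) (m : nat) (a : nat -> R) (s : R) : {set R} :=
  [set (\sum_(i < m) a (sigma i) * s ^+ i) | sigma : 'S_m].

(* Write q = 4n + 1 and m = 2n.  Then y^m = 1 or y^m = -1 for every nonzero y,
   and the powers of s are exactly the solutions of y^m = 1.  The set A of
   permuted sums is stable under multiplication by s (rotate the permutation),
   so A contains all nonzero residues as soon as it contains some y with
   y^m = 1 and some y with y^m = -1.
   Choose a permutation whose even part al and odd part be are both nonzero;
   shifting the odd positions cyclically by 2t shows al + s^(2t) be \in A for
   every t.  If A missed the sign e, these n elements would all satisfy
   x^(2n) = -e or x = 0.  Summing x^(2n+j) = -e x^j over t for j = 1, 2 and
   expanding binomially over the n-th roots of unity s^2 gives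
   8 (al^(2n) + e) = 3 be^(2n), which forces q | 3^2 * 13 * 19.  This leaves
   q = 13, settled by an exhaustive computation after normalising a_0 = 0 and
   a_2 = 1. *)

From mathcomp Require Import all_boot all_order all_algebra all_fingroup.
From mathcomp Require Import finfield ring zify.

Import GRing.Theory.
Local Open Scope ring_scope.

Lemma expf_card_pred {F : finFieldType} (x : F) : x != 0 -> x ^+ #|F|.-1 = 1.
Proof.
move=> x0; apply: (mulfI x0); rewrite mulr1 -exprS prednK ?expf_card //.
by apply/card_gt0P; exists 0.
Qed.

Definition reaches_signs {F : finFieldType} (m : nat) (A : {set F}) : Prop :=
  forall e : F, e ^+ 2 = 1 -> exists2 y, y \in A & y ^+ m = e.

Lemma reaches_signs_scale {F : finFieldType} {m : nat} (A : {set F}) (lam : F) :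
  (lam ^+ m) ^+ 2 = 1 -> reaches_signs m [set lam * y | y in A] -> reaches_signs m A.
Proof.
move=> lam2 hit e e2.
have [_ /imsetP [y yA ->] ye] : exists2 z, z \in [set lam * y | y in A] &
    z ^+ m = e * lam ^+ m by apply: hit; rewrite exprMn e2 lam2 mulr1.
exists y => //; apply: (mulIf (x := lam ^+ m)); last by rewrite mulrC -exprMn.
by apply: contra_eqN lam2 => /eqP ->; rewrite expr0n eq_sym oner_eq0.
Qed.

Lemma card_reaches_signs {F : finFieldType} {m : nat} {s : F} {A : {set F}} :
  #|F| = m.*2.+1 -> m.-primitive_root s -> {in A, forall y, s * y \in A} ->
  reaches_signs m A -> (m.*2 <= #|A|)%N.
Proof.
move=> cardF s_prim sA hit.
have m_gt0 := prim_order_gt0 s_prim.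
suff /subset_leq_card : [set: F] :\ 0 \subset A.
  by have := cardsD1 (0 : F) setT; rewrite inE cardsT cardF add1n => -[<-].
apply/subsetP => x; rewrite !inE andbT => x0.
have [y yA yx] : exists2 y, y \in A & y ^+ m = x ^+ m.
  by apply: hit; rewrite -exprM muln2 -[m.*2]/(m.*2.+1.-1) -cardF expf_card_pred.
have y0 : y != 0 by apply: contra_eqN yx => /eqP ->; rewrite expr0n gtn_eqF // eq_sym expf_neq0.
have [i xy] : {i : 'I_m | x / y = s ^+ i}.
  by apply: (prim_rootP s_prim); rewrite exprMn exprVn yx mulfV // expf_neq0.
rewrite -(divfK y0 x) xy; elim: (val i) => [|k IHk]; first by rewrite mul1r.
by rewrite exprS -mulrA sA.
Qed.

Section PermSums.

Context {F : finFieldType} {m : nat} (a : nat -> F) (s : F).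

Definition perm_sum (sigma : 'S_m) : F := \sum_(i < m) a (sigma i) * s ^+ i.

Definition part_sum (P : pred nat) (sigma : 'S_m) : F :=
  \sum_(i < m | P i) a (sigma i) * s ^+ i.

Lemma perm_sum_in (sigma : 'S_m) : perm_sum sigma \in perm_sums m a s.
Proof. exact: imset_f. Qed.

Definition shift_on (k : nat) (P : pred nat) (i : 'I_m) : 'I_m :=
  if P i then Ordinal (ltn_pmod (i + k) (leq_ltn_trans (leq0n i) (ltn_ord i))) else i.

Lemma shift_on_inj {k : nat} {P : pred nat} :
  (forall i, P ((i + k) %% m)%N = P i) -> injective (shift_on k P).
Proof.
move=> Pk i j; rewrite /shift_on.
case Pi: (P i); case Pj: (P j) => // ij.
- move/(congr1 val)/eqP: ij; rewrite /= eqn_modDr !modn_small //.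
  by move/eqP/val_inj.
- by move: Pj; rewrite -ij /= Pk Pi.
- by move: Pi; rewrite ij /= Pk Pj.
Qed.

Hypothesis s_m : s ^+ m = 1.

Lemma perm_sum_shift (k : nat) (P : pred nat) (Pk : forall i, P ((i + k) %% m)%N = P i)
    (sigma : 'S_m) :
  perm_sum ((perm (shift_on_inj Pk))^-1 * sigma) =
  \sum_(i < m) (if P i then s ^+ k else 1) * (a (sigma i) * s ^+ i).
Proof.
rewrite /perm_sum (reindex_inj (@perm_inj _ (perm (shift_on_inj Pk)))).
apply: eq_bigr => i _; rewrite permM permK permE /shift_on.
by case: (P i); rewrite /= ?expr_mod // ?mul1r // exprD; ring.
Qed.

Lemma mul_perm_sums (y : F) : y \in perm_sums m a s -> s * y \in perm_sums m a s.
Proof.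
case/imsetP=> sigma _ ->.
have Pk : forall i, predT ((i + 1) %% m)%N = predT i by [].
have -> : s * perm_sum sigma = perm_sum ((perm (shift_on_inj Pk))^-1 * sigma).
  by rewrite perm_sum_shift /perm_sum mulr_sumr.
exact: perm_sum_in.
Qed.

Lemma shift_odd_perm_sums (sigma : 'S_m) (t : nat) : ~~ odd m ->
  part_sum (fun i => ~~ odd i) sigma + s ^+ t.*2 * part_sum odd sigma \in perm_sums m a s.
Proof.
move=> m_even.
have Pk : forall i, odd ((i + t.*2) %% m)%N = odd i.
  by move=> i; rewrite odd_mod ?(negbTE m_even) // oddD odd_double addbF.
have -> : part_sum (fun i => ~~ odd i) sigma + s ^+ t.*2 * part_sum odd sigma =
    perm_sum ((perm (shift_on_inj Pk))^-1 * sigma).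
  rewrite perm_sum_shift (bigID (fun i : 'I_m => odd i)) addrC mulr_sumr.
  by congr (_ + _); apply: eq_bigr => i; [move-> | move/negbTE->; rewrite mul1r].
exact: perm_sum_in.
Qed.

Lemma part_sum_tperm (P : pred nat) (sigma : 'S_m) (p p' : 'I_m) :
  p != p' -> P p -> P p' ->
  part_sum P (tperm p p' * sigma) =
  part_sum P sigma + (a (sigma p') - a (sigma p)) * (s ^+ p - s ^+ p').
Proof.
move=> pp' Pp Pp'; have Pp'_p : P p' && (p' != p) by rewrite Pp' eq_sym.
rewrite /part_sum (bigD1 p Pp) (bigD1 p' Pp'_p) [in RHS](bigD1 p Pp) [in RHS](bigD1 p' Pp'_p) /=.
rewrite !permM tpermL tpermR (eq_bigr (fun i : 'I_m => a (sigma i) * s ^+ i)); first ring.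
by move=> i /andP[/andP[_ ip] ip']; rewrite permM tpermD // eq_sym.
Qed.

Lemma part_sum_neq0 (P : pred nat) (sigma : 'S_m) (p p' : 'I_m) :
  m.-primitive_root s -> P p -> P p' -> a (sigma p) != a (sigma p') ->
  exists2 tau : 'S_m, part_sum P tau != 0 & forall i : 'I_m, ~~ P i -> tau i = sigma i.
Proof.
move=> s_prim Pp Pp' a_pp'.
have [sigma0|] := eqVneq (part_sum P sigma) 0; last by exists sigma.
have pp' : p != p' by apply: contraNneq a_pp' => ->.
exists (tperm p p' * sigma)%g.
  rewrite part_sum_tperm // sigma0 add0r mulf_neq0 // subr_eq0 1?eq_sym //.
  by rewrite (eq_prim_root_expr s_prim) !modn_small // eq_sym.
move=> i Pi; rewrite permM tpermD //; apply: contraNneq Pi => <- //.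
Qed.

Lemma exists_part_sums_neq0 : m.-primitive_root s ->
  (exists i j : nat, [/\ (i < m)%N, (j < m)%N, ~~ odd i, ~~ odd j & a i != a j]) ->
  (exists i j : nat, [/\ (i < m)%N, (j < m)%N, odd i, odd j & a i != a j]) ->
  exists sigma : 'S_m,
    part_sum (fun i => ~~ odd i) sigma != 0 /\ part_sum odd sigma != 0.
Proof.
move=> s_prim [i0 [j0 [i0m j0m i0e j0e a0]]] [i1 [j1 [i1m j1m i1o j1o a1]]].
case: (@part_sum_neq0 (fun i => ~~ odd i) 1 (Ordinal i0m) (Ordinal j0m) s_prim i0e j0e)
  => [|tau0 tau0_neq0 tau0_odd]; first by rewrite !perm1.
case: (@part_sum_neq0 odd tau0 (Ordinal i1m) (Ordinal j1m) s_prim i1o j1o)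
  => [|tau1 tau1_neq0 tau1_even]; first by rewrite !tau0_odd ?perm1 //= negbK.
exists tau1; split=> //; rewrite /part_sum (eq_bigr (fun i => a (tau0 i) * s ^+ i)) //.
by move=> i i_even; rewrite tau1_even.
Qed.

Lemma perm_sums_affine (lam c : F) : \sum_(i < m) s ^+ i = 0 ->
  perm_sums m (fun k => lam * (a k - c)) s = [set lam * y | y in perm_sums m a s].
Proof.
move=> sum_s; rewrite -imset_comp; apply: eq_imset => sigma /=.
rewrite mulr_sumr (eq_bigr (fun i => lam * (a (sigma i) * s ^+ i) - lam * c * s ^+ i)).
  by rewrite sumrB -!mulr_sumr sum_s mulr0 subr0.
by move=> i _; ring.
Qed.

End PermSums.

Lemma perm_sums_comp_perm {F : finFieldType} {n : nat} (a : nat -> F) (s : F) (pi : 'S_n.+1) :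
  perm_sums n.+1 (fun k => a (pi (inord k))) s = perm_sums n.+1 a s.
Proof.
apply/setP => y; apply/imsetP/imsetP => -[sigma _ ->].
  by exists (sigma * pi)%g => //; apply: eq_bigr => i _; rewrite inord_val permM.
by exists (sigma * pi^-1)%g => //; apply: eq_bigr => i _; rewrite permM inord_val permKV.
Qed.

Lemma sum_dvdn_lt3 (V : nmodType) (n k : nat) (g : nat -> V) : (0 < n)%N -> (k < 3 * n)%N ->
  \sum_(l < k.+1 | (n %| l)%N) g l =
  g 0%N + (if (n <= k)%N then g n else 0) + (if (n.*2 <= k)%N then g n.*2 else 0).
Proof.
move=> n_gt0; elim: k => [|k IHk] k_lt.
  by rewrite big_mkcond big_ord1 dvdn0 !leqn0 double_eq0 eqn0Ngt n_gt0 !addr0.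
rewrite big_mkcond big_ord_recr -big_mkcond IHk /=; last by lia.
have [/dvdnP[c k_cn]|n_ndvd] := boolP (n %| k.+1)%N.
  have [c1|c2] : c = 1%N \/ c = 2%N.
    move: k_lt; rewrite k_cn ltn_mul2r n_gt0 /=.
    by case: c k_cn => [|[|[|c]]] // _ _; [left | right].
  - have [-> -> -> ->] : [/\ (n <= k)%N = false, (n.*2 <= k)%N = false,
      (n <= k.+1)%N & (n.*2 <= k.+1)%N = false] by split; lia.
    by rewrite k_cn c1 mul1n !addr0.
  - have [-> -> -> ->] : [/\ (n <= k)%N, (n.*2 <= k)%N = false,
      (n <= k.+1)%N & (n.*2 <= k.+1)%N] by split; lia.
    by rewrite k_cn c2 mul2n addr0.
have [kn kn2] : k.+1 != n /\ k.+1 != n.*2.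
  by split; apply: contraNneq n_ndvd => ->; rewrite ?dvdnn // -mul2n dvdn_mull.
have [-> ->] : (n <= k.+1)%N = (n <= k)%N /\ (n.*2 <= k.+1)%N = (n.*2 <= k)%N.
  by split; apply/idP/idP; lia.
by rewrite addr0.
Qed.

Section OrbitPowerSums.

Context {F : fieldType} {n : nat} {w : F}.
Hypothesis w_prim : n.-primitive_root w.

Lemma sum_prim_root_exp (l : nat) :
  \sum_(t < n) (w ^+ t) ^+ l = if (n %| l)%N then n%:R else 0.
Proof.
under eq_bigr do rewrite exprAC.
case: ifPn => [n_l|n_ndvd_l].
  have -> : w ^+ l = 1 by apply/eqP; rewrite -(prim_order_dvd w_prim).
  by under eq_bigr do rewrite expr1n; rewrite sumr_const card_ord.
have wl1 : w ^+ l - 1 != 0 by rewrite subr_eq0 -(prim_order_dvd w_prim).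
apply: (mulfI wl1); rewrite mulr0 -subrX1 exprAC (prim_expr_order w_prim) expr1n.
exact: subrr.
Qed.

Lemma sum_orbit_exp (al be : F) (k : nat) : (k < 3 * n)%N ->
  \sum_(t < n) (al + w ^+ t * be) ^+ k =
  n%:R * (al ^+ k + (if (n <= k)%N then al ^+ (k - n) * be ^+ n *+ 'C(k, n) else 0)
    + (if (n.*2 <= k)%N then al ^+ (k - n.*2) * be ^+ n.*2 *+ 'C(k, n.*2) else 0)).
Proof.
move=> k_lt; have n_gt0 := prim_order_gt0 w_prim.
pose g l := al ^+ (k - l) * be ^+ l *+ 'C(k, l).
transitivity (\sum_(l < k.+1) g l * \sum_(t < n) (w ^+ t) ^+ l).
  under eq_bigr do rewrite exprDn.
  rewrite exchange_big; apply: eq_bigr => l _; rewrite mulr_sumr.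
  by apply: eq_bigr => t _; rewrite exprMn /g; ring.
under eq_bigr do rewrite sum_prim_root_exp.
rewrite (bigID (fun l : 'I_k.+1 => n %| l)%N) /= [X in _ + X]big1 => [|l /negbTE->]; last first.
  by rewrite mulr0.
have -> : al ^+ k = g 0%N by rewrite /g subn0 expr0 mulr1 bin0 mulr1n.
rewrite addr0 -(@sum_dvdn_lt3 _ n k g) // mulr_sumr; apply: eq_bigr => l ->.
by rewrite mulrC.
Qed.

Lemma orbit_exp_relation (al be e : F) (j : nat) :
  (0 < j < n)%N -> n%:R != 0 :> F -> al != 0 ->
  (forall t : 'I_n, (al + w ^+ t * be) ^+ n.*2 = e \/ al + w ^+ t * be = 0) ->
  al ^+ n.*2 - e + al ^+ n * be ^+ n * ('C(n.*2 + j, n))%:R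
    + be ^+ n.*2 * ('C(n.*2 + j, n.*2))%:R = 0.
Proof.
move=> /andP[j_gt0 j_lt] n_neq0 al0 orbit.
have : \sum_(t < n) (al + w ^+ t * be) ^+ (n.*2 + j) =
       e * \sum_(t < n) (al + w ^+ t * be) ^+ j.
  rewrite mulr_sumr; apply: eq_bigr => t _.
  case: (orbit t) => [x_e | ->]; first by rewrite exprD x_e.
  by rewrite !expr0n addn_eq0 (gtn_eqF j_gt0) andbF mulr0.
rewrite !sum_orbit_exp; try lia.
have [-> -> -> ->] : [/\ (n <= n.*2 + j)%N, (n.*2 <= n.*2 + j)%N,
  (n <= j)%N = false & (n.*2 <= j)%N = false] by split; lia.
rewrite (_ : n.*2 + j - n = n + j)%N ?addKn; last by lia.
move/eqP; rewrite -subr_eq0 => /eqP sum_eq.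
apply: (mulfI (mulf_neq0 n_neq0 (expf_neq0 j al0))); rewrite mulr0 -[RHS]sum_eq.
by rewrite !exprD; ring.
Qed.

Lemma orbit_sign_relation (al be e : F) :
  (2 < n)%N -> (4 * n + 1)%:R = 0 :> F -> al != 0 ->
  (forall t : 'I_n, (al + w ^+ t * be) ^+ n.*2 = e \/ al + w ^+ t * be = 0) ->
  8%:R * (al ^+ n.*2 - e) = 3%:R * be ^+ n.*2.
Proof.
move=> n_gt2 char_F al0 orbit.
have neq0_of_inv (x y : F) : x * y = -1 -> x != 0.
  by move=> xy; apply/eqP => x0; move/eqP: xy; rewrite x0 mul0r eq_sym oppr_eq0 oner_eq0.
have n4 : n%:R * 4%:R = -1 :> F.
  by apply/eqP; rewrite -addr_eq0 -natrM mulnC natr1 -addn1 char_F.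
have n_neq0 : n%:R != 0 :> F by apply: neq0_of_inv n4.
have n2_neq0 : (n.*2)%:R != 0 :> F.
  by apply: (@neq0_of_inv _ 2%:R); rewrite -natrM (_ : n.*2 * 2 = n * 4)%N ?natrM //; lia.
have E1 := orbit_exp_relation al be e 1 ltac:(lia) n_neq0 al0 orbit.
have E2 := orbit_exp_relation al be e 2 ltac:(lia) n_neq0 al0 orbit.
set A := al ^+ n.*2 in E1 E2 *; set X := al ^+ n * be ^+ n in E1 E2.
set Y := be ^+ n.*2 in E1 E2 *.
set c1 := 'C(n.*2 + 1, n) in E1; set c2 := 'C(n.*2 + 2, n) in E2.
set d1 := 'C(n.*2 + 1, n.*2) in E1; set d2 := 'C(n.*2 + 2, n.*2) in E2.
have c12 : ((n + 2) * c2 = (n.*2 + 2) * c1)%N.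
  have := mul_bin_down (n.*2 + 2) n.
  have [-> ->] : (n.*2 + 2).-1 = (n.*2 + 1)%N /\ (n.*2 + 2 - n = n + 2)%N by split; lia.
  by move->.
have d1E : d1 = (n.*2 + 1)%N by rewrite /d1 addn1 binSn.
have d2E : (2 * d2 = (n.*2 + 2) * (n.*2 + 1))%N.
  have := mul_bin_down (n.*2 + 2) n.*2.
  have [-> ->] : (n.*2 + 2).-1 = (n.*2).+1 /\ (n.*2 + 2 - n.*2 = 2)%N by split; lia.
  by rewrite binSn addn1 => ->.
(* The combination of the relations for j = 1, 2 that eliminates X. *)
have A_e : (n.*2)%:R * (A - e - ((n + 1) * (n.*2 + 1))%:R * Y) = 0.
  have -> : (n.*2)%:R * (A - e - ((n + 1) * (n.*2 + 1))%:R * Y) =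
    (2 * (n.*2 + 2))%:R * (A - e + X * c1%:R + Y * d1%:R)
    - (2 * (n + 2))%:R * (A - e + X * c2%:R + Y * d2%:R)
    + 2%:R * X * (((n + 2) * c2)%:R - ((n.*2 + 2) * c1)%:R)
    + (n + 2)%:R * Y * ((2 * d2)%:R - ((n.*2 + 2) * (n.*2 + 1))%:R).
    by rewrite d1E -!muln2 !natrM; ring.
  by rewrite E1 E2 c12 d2E !subrr; ring.
move/eqP: A_e; rewrite mulf_eq0 (negbTE n2_neq0) subr_eq0 => /eqP ->.
rewrite mulrA -natrM.
have -> : (8 * ((n + 1) * (n.*2 + 1)) = 3 + (4 * n + 1) * (4 * n + 5))%N.
  by rewrite -muln2; ring.
by rewrite natrD natrM char_F mul0r addr0.
Qed.

End OrbitPowerSums.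

(* Squaring 8 (x - z) = 3 y gives 128 x z = 119, and squaring again gives
   128^2 = 119^2, i.e. 3^2 * 13 * 19 = 0. *)
Lemma sign_relation_char {R : comPzRingType} {x y z : R} :
  x ^+ 2 = 1 -> y ^+ 2 = 1 -> z ^+ 2 = 1 -> 8%:R * (x - z) = 3%:R * y ->
  (3 ^ 2 * 13 * 19)%:R = 0 :> R.
Proof.
move=> x2 y2 z2 xyz.
have -> : (3 ^ 2 * 13 * 19)%:R =
    128%:R ^+ 2 * ((1 - x ^+ 2) + x ^+ 2 * (1 - z ^+ 2))
    + (64%:R * (x ^+ 2 - 1) + 64%:R * (z ^+ 2 - 1) - 9%:R * (y ^+ 2 - 1)
       - (8%:R * (x - z) - 3%:R * y) * (8%:R * (x - z) + 3%:R * y))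
      * (128%:R * x * z + 119%:R) :> R.
  by ring.
by rewrite x2 y2 z2 xyz !subrr; ring.
Qed.

Lemma perm_sums_reaches_signs (q n : nat) (s : 'F_q) (a : nat -> 'F_q) :
  prime q -> q = (4 * n + 1)%N -> (13 < q)%N -> (n.*2).-primitive_root s ->
  (exists i j : nat, [/\ (i < n.*2)%N, (j < n.*2)%N, ~~ odd i, ~~ odd j & a i != a j]) ->
  (exists i j : nat, [/\ (i < n.*2)%N, (j < n.*2)%N, odd i, odd j & a i != a j]) ->
  reaches_signs (n.*2) (perm_sums (n.*2) a s).
Proof.
move=> q_prime q_4n q_gt13 s_prim even_neq odd_neq e e2.
set A := perm_sums _ _ _.
have [/exists_inP[y yA /eqP ye]|no_y] := boolP [exists y in A, y ^+ n.*2 == e].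
  by exists y.
exfalso.
have n_gt2 : (2 < n)%N by lia.
have char_F : (4 * n + 1)%:R = 0 :> 'F_q by rewrite -q_4n pchar_Fp_0.
have fermat (x : 'F_q) : x != 0 -> (x ^+ n.*2) ^+ 2 = 1.
  move=> x0; rewrite -exprM (_ : n.*2 * 2 = #|'F_q|.-1)%N ?expf_card_pred //.
  by rewrite card_Fp // q_4n; lia.
have w_prim : n.-primitive_root (s ^+ 2).
  by have := exp_prim_root s_prim 2; rewrite -muln2 gcdnMl mulnK.
have [sigma [al0 be0]] := exists_part_sums_neq0 a s s_prim even_neq odd_neq.
set al := part_sum _ _ _ sigma in al0 *; set be := part_sum _ _ _ sigma in be0 *.
have orbit (t : 'I_n) :
    (al + (s ^+ 2) ^+ t * be) ^+ n.*2 = - e \/ al + (s ^+ 2) ^+ t * be = 0.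
  have := shift_odd_perm_sums a s (prim_expr_order s_prim) sigma t (negbT (odd_double n)).
  rewrite -exprM mulnC muln2; set y := _ + _ => yA.
  have [->|y0] := eqVneq y 0; [by right | left].
  move: no_y; rewrite negb_exists_in => /forall_inP/(_ y yA).
  move: e2 => /eqP; rewrite sqrf_eq1 => /orP[]/eqP-> /negPf ne; rewrite ?opprK;
    by move/eqP: (fermat y y0); rewrite sqrf_eq1 ne ?orbF => /eqP.
have := orbit_sign_relation w_prim al be (- e) n_gt2 char_F al0 orbit.
move/(sign_relation_char (fermat al al0) (fermat be be0) (etrans (sqrrN e) e2))/eqP.
rewrite -(dvdn_pcharf (pchar_Fp q_prime)) !Euclid_dvdM // !dvdn_prime2 //.
by move=> /orP[/orP[/orP[]|]|] /eqP; lia.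
Qed.

(* Arithmetic modulo 13 on unary nat by table lookup: computing [%%] at every
   step makes the exhaustive search below several times slower. *)
Section Arith13.
Local Open Scope nat_scope.

Definition table13 (f : nat -> nat -> nat) : seq (seq nat) :=
  [seq [seq f x y %% 13 | y <- iota 0 13] | x <- iota 0 13].

Definition add_table13 : seq (seq nat) := table13 addn.
Definition mul_table13 : seq (seq nat) := table13 muln.

Definition add13 (x y : nat) : nat := nth 0 (nth [::] add_table13 x) y.
Definition mul13 (x y : nat) : nat := nth 0 (nth [::] mul_table13 x) y.

Definition pow6_13 (y : nat) : nat := let y3 := mul13 y (mul13 y y) in mul13 y3 y3.

Definition sum13 (s : nat) (v : nat -> nat) (l : seq nat) : nat :=
  foldr (fun p acc => add13 (v p) (mul13 s acc)) 0 l.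

End Arith13.

Lemma table13E (f : nat -> nat -> nat) (x y : 'F_13) :
  nth 0%N (nth [::] (table13 f) x) y = (f x y %% 13)%N.
Proof.
have x13 : (x < 13)%N := ltn_ord x; have y13 : (y < 13)%N := ltn_ord y.
by rewrite (nth_map 0%N) ?size_iota // (nth_map 0%N) ?size_iota // !nth_iota.
Qed.

Lemma add13E (x y : 'F_13) : add13 x y = val (x + y).
Proof. exact: table13E. Qed.

Lemma mul13E (x y : 'F_13) : mul13 x y = val (x * y).
Proof. exact: table13E. Qed.

Lemma pow6_13E (y : 'F_13) : pow6_13 y = val (y ^+ 6).
Proof. by rewrite /pow6_13 !mul13E (_ : y * (y * y) * (y * (y * y)) = y ^+ 6) //; ring. Qed.

Lemma sum13E (s : 'F_13) (v : nat -> nat) (w : nat -> 'F_13) (l : seq nat) :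
  {in l, forall p, v p = val (w p)} ->
  sum13 s v l = val (\sum_(i < size l) w (nth 0%N l i) * s ^+ i).
Proof.
elim: l => [|p l IHl] vw /=; first by rewrite big_ord0.
rewrite IHl => [|r rl]; last by apply: vw; rewrite inE rl orbT.
rewrite mul13E vw ?mem_head // add13E; congr val.
rewrite big_ord_recl expr0 mulr1 mulr_sumr; congr (_ + _).
by apply: eq_bigr => i _; rewrite exprS lift0; ring.
Qed.

Lemma perm_of_seq {n : nat} {l : seq nat} :
  uniq l -> size l = n -> all (fun x => x < n)%N l ->
  exists sigma : 'S_n, forall i : 'I_n, sigma i = nth 0%N l i :> nat.
Proof.
move=> l_uniq l_size l_lt.
have l_lt_n (i : 'I_n) : (nth 0%N l i < n)%N.
  by apply: (allP l_lt); rewrite mem_nth ?l_size.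
have f_inj : injective (fun i : 'I_n => insubd i (nth 0%N l i)).
  move=> i j /(congr1 val); rewrite !val_insubd !l_lt_n => /eqP.
  by rewrite nth_uniq ?l_size // => /eqP/val_inj.
by exists (perm f_inj) => i; rewrite permE val_insubd l_lt_n.
Qed.

(* Permutations (lists of images of 0, ..., 5) found by an external search:
   for every admissible s and normalised coefficients, some list in cands_pos
   yields a sum with sixth power 1 and some list in cands_neg one with sixth
   power -1. *)
Definition cands_pos : seq (seq nat) :=
  [:: [:: 0; 1; 2; 3; 4; 5]; [:: 0; 1; 2; 5; 4; 3]; [:: 0; 3; 2; 1; 4; 5];
      [:: 0; 1; 2; 3; 5; 4]; [:: 0; 1; 2; 4; 3; 5]; [:: 0; 3; 2; 4; 5; 1];
      [:: 0; 5; 2; 4; 1; 3]; [:: 0; 5; 2; 1; 4; 3]; [:: 0; 2; 1; 5; 4; 3];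
      [:: 0; 2; 4; 3; 1; 5]; [:: 0; 1; 5; 2; 4; 3]; [:: 0; 1; 3; 4; 5; 2];
      [:: 0; 4; 3; 2; 5; 1]]%N.

Definition cands_neg : seq (seq nat) :=
  [:: [:: 0; 1; 2; 3; 4; 5]; [:: 0; 3; 4; 5; 2; 1]; [:: 0; 1; 2; 5; 4; 3];
      [:: 0; 5; 4; 3; 2; 1]; [:: 0; 1; 4; 3; 2; 5]; [:: 0; 5; 2; 1; 4; 3];
      [:: 0; 3; 2; 5; 4; 1]; [:: 0; 1; 4; 5; 2; 3]; [:: 0; 3; 4; 1; 2; 5]]%N.

Lemma cands_perm : all (fun l => [&& uniq l, size l == 6 & all (fun x => x < 6) l])%N
  (cands_pos ++ cands_neg).
Proof. by []. Qed.

Definition good13 (s : nat) (v : nat -> nat) : bool :=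
  has (fun l => pow6_13 (sum13 s v l) == 1) cands_pos &&
  has (fun l => pow6_13 (sum13 s v l) == 12) cands_neg.

Definition check13 : bool :=
  all (fun s => [|| pow6_13 s != 1, mul13 s s == 1, mul13 s (mul13 s s) == 1 |
    all (fun v1 => all (fun v3 => all (fun v4 => all (fun v5 =>
      ((v1 == v3) && (v3 == v5)) || good13 s (nth 0 [:: 0; v1; 1; v3; v4; v5]))
    (iota 0 13)) (iota 0 13)) (iota 0 13)) (iota 0 13)])%N
  (iota 0 13).

Lemma check13_ok : check13.
Proof. by vm_compute. Qed.

Lemma reaches_signs13 (s : 'F_13) (b : nat -> 'F_13) :
  6.-primitive_root s -> b 0%N = 0 -> b 2%N = 1 -> (b 1%N != b 3%N) || (b 3%N != b 5%N) ->
  reaches_signs 6 (perm_sums 6 b s).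
Proof.
move=> s_prim b0 b2 b_odd.
have in13 (x : 'F_13) : val x \in iota 0 13 by rewrite mem_iota ltn_ord.
have s_pow k : (val (s ^+ k) == 1%N) = (6 %| k)%N by rewrite (prim_order_dvd s_prim).
have s6 : (pow6_13 s != 1%N) = false by rewrite pow6_13E s_pow.
have s2 : (mul13 s s == 1%N) = false by rewrite mul13E -expr2 s_pow.
have s3 : (mul13 s (mul13 s s) == 1%N) = false by rewrite !mul13E -expr2 -exprS s_pow.
have b_odd' : ((val (b 1%N) == val (b 3%N)) && (val (b 3%N) == val (b 5%N))) = false.
  by apply/negbTE; rewrite negb_and.
pose v := nth 0%N [:: 0; val (b 1%N); 1; val (b 3%N); val (b 4%N); val (b 5%N)]%N.
have /andP[] : good13 s v.
  move: (allP check13_ok _ (in13 s)); rewrite s6 s2 s3 !orFb.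
  move=> /allP/(_ _ (in13 (b 1%N)))/allP/(_ _ (in13 (b 3%N))).
  move=> /allP/(_ _ (in13 (b 4%N)))/allP/(_ _ (in13 (b 5%N))).
  by rewrite b_odd'.
have y_of l : l \in cands_pos ++ cands_neg ->
    exists2 y, y \in perm_sums 6 b s & val (y ^+ 6) = pow6_13 (sum13 s v l).
  move=> l_in; have /and3P[l_uniq /eqP l_size l_lt] := allP cands_perm l l_in.
  have [sigma sigmaE] := perm_of_seq l_uniq l_size l_lt.
  exists (perm_sum b s sigma); first exact: perm_sum_in.
  rewrite (@sum13E s v b) => [|p /(allP l_lt)]; last first.
    by case: p => [|[|[|[|[|[|p]]]]]] //= _; rewrite ?b0 ?b2.
  rewrite pow6_13E /perm_sum l_size.
  by rewrite (eq_bigr (fun i : 'I_6 => b (nth 0%N l i) * s ^+ i)) // => i _; rewrite sigmaE.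
move=> /hasP[l1 l1_pos /eqP y1] /hasP[l2 l2_neg /eqP y2] e /eqP.
rewrite sqrf_eq1 => /orP[]/eqP->.
  case: (y_of l1) => [|y yA yE]; first by rewrite mem_cat l1_pos.
  by exists y => //; apply: val_inj; rewrite yE y1.
case: (y_of l2) => [|y yA yE]; first by rewrite mem_cat l2_neg orbT.
by exists y => //; apply: val_inj; rewrite yE y2.
Qed.

Lemma exists_neq_at {T : eqType} {a : nat -> T} {m : nat} {P : pred nat} (k0 : nat) :
  (exists i j : nat, [/\ (i < m)%N, (j < m)%N, P i, P j & a i != a j]) ->
  exists k : nat, [/\ (k < m)%N, P k & a k != a k0].
Proof.
move=> [i [j [im jm Pi Pj aij]]].
have [ai|] := eqVneq (a i) (a k0); last by exists i.
by exists j; rewrite -ai eq_sym.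
Qed.

Lemma perm_sums13_reaches_signs (s : 'F_13) (a : nat -> 'F_13) :
  6.-primitive_root s ->
  (exists i j : nat, [/\ (i < 6)%N, (j < 6)%N, ~~ odd i, ~~ odd j & a i != a j]) ->
  (exists i j : nat, [/\ (i < 6)%N, (j < 6)%N, odd i, odd j & a i != a j]) ->
  reaches_signs 6 (perm_sums 6 a s).
Proof.
move=> s_prim even_neq odd_neq.
have [k [k6 k_even ak]] := exists_neq_at 0 even_neq.
(* Swapping a_2 with a_k and applying the affine map x |-> lam (x - a_0)
   normalises a_0 = 0 and a_2 = 1; this multiplies A by lam, and lam^6 = +-1. *)
pose pi : 'S_6 := tperm (inord 2) (inord k).
pose b l := a (pi (inord l)).
have b_fix l : (l < 6)%N -> l != 2%N -> l != k -> b l = a l.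
  move=> l6 l2 lk; rewrite /b tpermD ?inordK //.
    by apply: contra_neq l2 => /(congr1 val); rewrite /= !inordK // => ->.
  by apply: contra_neq lk => /(congr1 val); rewrite /= !inordK // => ->.
have b2 : b 2%N = a k by rewrite /b tpermL inordK.
have b0 : b 0%N = a 0%N by apply: b_fix => //; apply: contraNneq ak => <-.
have b_odd l : (l < 6)%N -> odd l -> b l = a l.
  by move=> l6 l_odd; apply: b_fix => //; apply: contraTneq l_odd => ->.
pose lam := (b 2%N - b 0%N)^-1.
have lam0 : lam != 0 by rewrite invr_eq0 subr_eq0 b2 b0.
pose c l := lam * (b l - b 0%N).
have sum_s : \sum_(i < 6) s ^+ i = 0.
  by have := sum_prim_root_exp s_prim 1; under eq_bigr do rewrite expr1.
apply: (@reaches_signs_scale _ _ _ lam).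
  by rewrite -exprM (_ : (6 * 2 = #|'F_13|.-1)%N) ?expf_card_pred // card_Fp.
rewrite -(perm_sums_comp_perm a s pi) -/b -(perm_sums_affine b s lam (b 0%N) sum_s).
apply: reaches_signs13 => //.
- by rewrite subrr mulr0.
- by rewrite mulVf // subr_eq0 b2 b0.
have [l [l6 l_odd al]] := exists_neq_at 1 odd_neq.
have cl : c l != c 1%N.
  by apply: contra_neq al => /(mulfI lam0)/addIr; rewrite !b_odd.
move: l6 l_odd cl; rewrite /c; clear al.
case: l => [|[|[|[|[|[|l]]]]]] //= _ _; first by rewrite eqxx.
  by move=> ne; rewrite eq_sym ne.
by move=> ne; case: eqP => //= <-; rewrite eq_sym.
Qed.

Theorem corollary2 (q : nat) (s : 'F_q) (a : nat -> 'F_q) :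
  prime q -> (q %% 4 = 1)%N -> (13 <= q)%N ->
  ((q - 1) %/ 2).-primitive_root s ->
  (exists i j : nat, [/\ (i < (q - 1) %/ 2)%N, (j < (q - 1) %/ 2)%N,
       ~~ odd i, ~~ odd j & a i != a j]) ->
  (exists i j : nat, [/\ (i < (q - 1) %/ 2)%N, (j < (q - 1) %/ 2)%N,
       odd i, odd j & a i != a j]) ->
  (q - 1 <= #|perm_sums ((q - 1) %/ 2) a s|)%N.
Proof.
move=> q_prime q_mod4 q_ge13 s_prim even_neq odd_neq.
have [n q_4n] : exists n, q = (4 * n + 1)%N by exists (q %/ 4)%N; lia.
have m_2n : ((q - 1) %/ 2 = n.*2)%N by rewrite q_4n; lia.
rewrite m_2n in s_prim even_neq odd_neq *; rewrite (_ : q - 1 = n.*2.*2)%N; last by lia.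
apply: (card_reaches_signs _ s_prim); first by rewrite card_Fp // q_4n; lia.
  exact: (mul_perm_sums a s (prim_expr_order s_prim)).
have [q13|q_gt13] : q = 13%N \/ (13 < q)%N by lia.
  have n3 : n = 3%N by lia.
  by subst n q; apply: perm_sums13_reaches_signs.
exact: perm_sums_reaches_signs q_4n q_gt13 s_prim even_neq odd_neq.
Qed.
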